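(* Let $h$ be a binary function symbol interpreted as associative and idempotent, let $a,b$ be distinct free constants, and let $x$ be a variable. Let $t = h(x,s_1,\ldots,s_n,x)$ with $n\ge 0$ and each $s_i\in\{x,a,b\}$ (an $(x,\{a,b\})$-simple word). Let $\sigma$ be a substitution with $x\sigma = s$, where $s\in\{h(a,b),h(b,a)\}$. Then $t\sigma \approx_{AI} s$.
   Context: Terms are built from a countable set of variables and a set of function symbols with fixed arities; substitutions map variables to terms, are the identity on all but finitely many variables, and are extended homomorphically to terms (written postfix, $t\sigma$). $AI$ denotes the equational theory generated by $h(x,h(y,z)) = h(h(x,y),z)$ and $h(x,x)=x$ for the symbol $h$ (all other symbols are free), and $s\approx_{AI} t$ means $s=t$ holds in every model of these axioms. Because $h$ is associative, $h(u_1,\ldots,u_m)$ for $m\ge 2$ denotes the flattened (any-bracketing) $h$-product of $u_1,\ldots,u_m$, and $h(u)$ denotes $u$. *)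

From Stdlib Require Import List.
Import ListNotations.

Section Terms.
Variable F : Type.

Inductive term : Type :=
| Var : nat -> term
| App : F -> list term -> term.

Fixpoint wf (arity : F -> nat) (t : term) : Prop :=
  match t with
  | Var _ => True
  | App f args => length args = arity f /\
      (fix wfl (l : list term) : Prop :=
         match l with [] => True | u :: us => wf arity u /\ wfl us end) args
  end.

Fixpoint subst (sigma : nat -> term) (t : term) : term :=
  match t with
  | Var v => sigma v
  | App f args => App f (map (subst sigma) args)
  end.

Definition is_substitution (sigma : nat -> term) : Prop :=
  exists dom : list nat, forall v, ~ In v dom -> sigma v = Var v.

Fixpoint eval (A : Type) (I : F -> list A -> A) (rho : nat -> A) (t : term) : A :=
  match t with
  | Var v => rho v
  | App f args => I f (map (eval A I rho) args)
  end.

Definition AI_model (h : F) (A : Type) (I : F -> list A -> A) : Prop :=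
  (forall x y z : A, I h [x; I h [y; z]] = I h [I h [x; y]; z]) /\
  (forall x : A, I h [x; x] = x).

Definition AI_eq (h : F) (s t : term) : Prop :=
  forall (A : Type) (I : F -> list A -> A) (rho : nat -> A),
    AI_model h A I -> eval A I rho s = eval A I rho t.

(* flattened h-product: hprod h u [u2;...;um] = h(u,u2,...,um), and h(u) = u *)
Fixpoint hprod (h : F) (u : term) (us : list term) : term :=
  match us with
  | [] => u
  | v :: vs => App h [u; hprod h v vs]
  end.

End Terms.

Arguments Var {F}.
Arguments App {F}.
Arguments wf {F}.
Arguments subst {F}.
Arguments is_substitution {F}.
Arguments eval {F}.
Arguments AI_model {F}.
Arguments AI_eq {F}.
Arguments hprod {F}.

(* In a band (an idempotent semigroup) put e = PQ.  The two-element set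
   {e, Qe} is closed under left multiplication by P, by Q and by e, and e
   absorbs it from the left: e e = e and e (Qe) = PQQPQ = PQPQ = e.  Under
   sigma the word h(x, s_1, ..., s_n, x) evaluates to e w_1 ... w_n e with
   every letter w_i among P, Q, e (where {P, Q} = {a, b}), so the suffix
   w_1 ... w_n e lies in {e, Qe} and the whole product collapses to e. *)

From Stdlib Require Import List.
Import ListNotations.

Section Band.
Variables (A : Type) (m : A -> A -> A).
Hypothesis m_assoc : forall x y z, m x (m y z) = m (m x y) z.
Hypothesis m_idem : forall x, m x x = x.
Variables P Q : A.

Definition pq_letter (y : A) : Prop := y = P \/ y = Q \/ y = m P Q.

Definition pq_suffix (v : A) : Prop := v = m P Q \/ v = m Q (m P Q).

Lemma mul_PQ_pq_suffix v : pq_suffix v -> m (m P Q) v = m P Q.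
Proof.
  intros [-> | ->].
  - apply m_idem.
  - rewrite <- m_assoc, (m_assoc Q Q), m_idem, m_assoc, m_idem.
    reflexivity.
Qed.

Lemma pq_suffix_mul y v : pq_letter y -> pq_suffix v -> pq_suffix (m y v).
Proof.
  intros [-> | [-> | ->]] Hv.
  - left; destruct Hv as [-> | ->]; rewrite m_assoc, m_idem; reflexivity.
  - right; destruct Hv as [-> | ->]; [reflexivity |].
    rewrite m_assoc, m_idem; reflexivity.
  - left; apply mul_PQ_pq_suffix, Hv.
Qed.

Lemma pq_suffix_foldr ys :
  Forall pq_letter ys -> pq_suffix (fold_right m (m P Q) ys).
Proof.
  induction 1 as [| y ys Hy _ IH]; cbn.
  - left; reflexivity.
  - apply pq_suffix_mul; assumption.
Qed.

Lemma mul_PQ_foldr_PQ ys :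
  Forall pq_letter ys -> m (m P Q) (fold_right m (m P Q) ys) = m P Q.
Proof. intros Hys; apply mul_PQ_pq_suffix, pq_suffix_foldr, Hys. Qed.

End Band.

Lemma subst_hprod (F : Type) (h : F) (sigma : nat -> term F) u us :
  subst sigma (hprod h u us) = hprod h (subst sigma u) (map (subst sigma) us).
Proof.
  revert u; induction us as [| v us IH]; intros u; cbn; [reflexivity |].
  rewrite IH; reflexivity.
Qed.

Lemma eval_hprod_snoc (F : Type) (h : F) (A : Type) (I : F -> list A -> A)
  (rho : nat -> A) u us w :
  eval A I rho (hprod h u (us ++ [w])) =
  fold_right (fun y z => I h [y; z]) (eval A I rho w)
    (map (eval A I rho) (u :: us)).
Proof.
  revert u; induction us as [| v us IH]; intros u; cbn; [reflexivity |].
  rewrite IH; reflexivity.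
Qed.

Theorem lemma1 (F : Type) (arity : F -> nat) (h a b : F)
  (Hh : arity h = 2) (Ha : arity a = 0) (Hb : arity b = 0) (Hab : a <> b)
  (Hha : h <> a) (Hhb : h <> b)
  (x : nat) (ss : list (term F))
  (Hss : forall si, In si ss -> si = Var x \/ si = App a [] \/ si = App b [])
  (s : term F)
  (Hs : s = App h [App a []; App b []] \/ s = App h [App b []; App a []])
  (sigma : nat -> term F) (Hsigma : is_substitution sigma)
  (Hxs : sigma x = s) :
  AI_eq h (subst sigma (hprod h (Var x) (ss ++ [Var x]))) s.
Proof.
  intros A I rho [Hassoc Hidem].
  rewrite subst_hprod, map_app; cbn [map subst].
  rewrite eval_hprod_snoc; cbn [map fold_right]; rewrite map_map, Hxs.
  destruct Hs as [-> | ->]; cbn;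
    apply (mul_PQ_foldr_PQ A (fun y z => I h [y; z])); try assumption;
    apply Forall_forall; intros y Hy; apply in_map_iff in Hy as (si & <- & Hsi);
    destruct (Hss si Hsi) as [-> | [-> | ->]]; cbn; rewrite ?Hxs; cbn;
    unfold pq_letter; tauto.
Qed.
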